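(* Let $X,X_1,X_2,\dots$ be i.i.d. real random variables with $EX=0$ and $E|X|^{2+\varepsilon}<\infty$ for some $\varepsilon>0$. Let $\mu>0$, $m\ge1$, $\delta\in(0,1/2]$ and $\alpha$ satisfy $2<\alpha\le(2+\varepsilon)(1-\delta)$, and assume $$\frac{6\cdot 2^{\alpha}}{(\alpha-1)(m+1)^{\alpha-1}\mu}\,E\big[(X^+)^{2+\varepsilon}\big]\le1.$$ Let $n_k=2^{k-1}$, $\bar G(t)=\int_t^\infty(1+s)^{-\alpha}ds$, $g(k)=\big(\bar G(m+\mu n_{k-1})-\bar G(m+\mu n_k)\big)/\bar G(m+\mu n_1)$ for $k\ge2$, and $$B_k=\bigcap_{j=1}^{n_k-1}\{X_j\le(\mu n_{k-1}+m)^{1-\delta}\}.$$ Then $$\frac{3P(B_k^c)}{g(k)}\le1\qquad\text{for all }k\ge2.$$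
   Context: $X^+=\max(X,0)$; $B_k^c$ is the complement of $B_k$. *)

From HB Require Import structures.
From mathcomp Require Import all_boot all_order all_algebra.
From mathcomp Require Import all_classical all_reals all_analysis.
Set Implicit Arguments. Unset Strict Implicit. Unset Printing Implicit Defensive.
Import Order.TTheory GRing.Theory Num.Theory.
Local Open Scope classical_set_scope.
Local Open Scope ring_scope.

Definition mutually_independent d (T : measurableType d) (R : realType)
  (P : probability T R) (X : nat -> {RV P >-> R}) : Prop :=
  forall (s : seq nat) (A : nat -> set R), uniq s ->
    (forall i, measurable (A i)) ->
    P (\bigcap_(i in [set i | i \in s]) (X i @^-1` A i))
    = (\prod_(i <- s) P (X i @^-1` A i))%E.

Definition identically_distributed d (T : measurableType d) (R : realType)
  (P : probability T R) (X : nat -> {RV P >-> R}) : Prop :=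
  forall i (A : set R), measurable A -> P (X i @^-1` A) = P (X 0%N @^-1` A).

Definition iid d (T : measurableType d) (R : realType)
  (P : probability T R) (X : nat -> {RV P >-> R}) : Prop :=
  mutually_independent X /\ identically_distributed X.

Definition nk (k : nat) : nat := (2 ^ k.-1)%N.

Definition Gbar (R : realType) (alpha t : R) : R :=
  Rintegral (@lebesgue_measure R) `[t, +oo[%classic
    (fun s => (1 + s) `^ (- alpha)).

Definition gfun (R : realType) (alpha m mu : R) (k : nat) : R :=
  (Gbar alpha (m + mu * (nk k.-1)%:R) - Gbar alpha (m + mu * (nk k)%:R))
  / Gbar alpha (m + mu * (nk 1)%:R).

Definition Bk d (T : measurableType d) (R : realType) (P : probability T R)
  (X : nat -> {RV P >-> R}) (mu m delta : R) (k : nat) : set T :=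
  \bigcap_(j in [set j | (1 <= j <= (nk k).-1)%N])
    [set t | X j t <= (mu * (nk k.-1)%:R + m) `^ (1 - delta)].

From HB Require Import structures.
From mathcomp Require Import all_boot all_order all_algebra.
From mathcomp Require Import all_classical all_reals all_analysis.
From mathcomp Require Import zify ring lra measurable_realfun.
Import Order.TTheory GRing.Theory Num.Theory.
Local Open Scope classical_set_scope.
Local Open Scope ring_scope.

(* By the union bound, P(B_k^c) <= n_k P(X > c) with c = (mu n_{k-1} + m)^(1-delta),
   and Markov's inequality for (X^+)^(2+eps), together with
   c^(2+eps) >= (mu n_{k-1} + m)^alpha, gives
   P(B_k^c) (mu n_{k-1} + m)^alpha <= n_k E[(X^+)^(2+eps)].
   On the other side Gbar(t) = (1+t)^(1-alpha)/(alpha-1) in closed form, and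
   x^(-b) - y^(-b) >= b (y-x) y^(-b-1) for 0 < x <= y gives
   g(k) >= (alpha-1) mu n_{k-1} (m+1)^(alpha-1) / (2 (mu n_{k-1} + m))^alpha.
   As n_k = 2 n_{k-1}, combining the two bounds with the moment hypothesis
   gives 3 P(B_k^c) <= g(k). *)

Section shifted_power.
Context {R : realType}.
Implicit Types p x : R.

Lemma is_derive_powR_shift p x : -1 < x ->
  is_derive x 1 (fun s => (1 + s) `^ p) (p * (1 + x) `^ (p - 1)).
Proof.
move=> x_gtN1.
have := @is_derive1_comp R (fun y => y `^ p) (fun s => 1 + s) x _ 1
  (@is_derive1_powR R p (1 + x) ltac:(lra)) _.
rewrite mulr1; apply.
have -> : (fun s : R => 1 + s) = cst 1 + id by [].
rewrite -[X in is_derive _ _ _ X]add0r; exact: is_deriveD.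
Qed.

Lemma powR_shift_cvg0 p : 0 < p -> (1 + s) `^ (- p) @[s --> +oo] --> 0.
Proof.
move=> p_gt0; apply/cvgr0Pnorm_lt => e e_gt0.
have ie_gt0 : 0 < e^-1 by rewrite invr_gt0.
set c := e^-1 `^ p^-1.
have c_ge0 : 0 <= c by exact: powR_ge0.
near=> s.
have s_gtc : c < s by near: s; apply: nbhs_pinfty_gt; rewrite num_real.
rewrite ger0_norm ?powR_ge0 // powRN -[e]invrK ltf_pV2 ?posrE ?powR_gt0 //; last lra.
have -> : e^-1 = c `^ p by rewrite -powRrM mulVf ?gt_eqF // powRr1 // ltW.
apply: gt0_ltr_powR; rewrite ?nnegrE //; lra.
Unshelve. all: by end_near. Qed.
End shifted_power.

Section Gbar_closed_form.
Variables (R : realType) (alpha : R).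
Hypothesis alpha_gt1 : 1 < alpha.

Let G (s : R) : R := - ((1 + s) `^ (1 - alpha) / (alpha - 1)).

Let is_derive_G (x : R) : -1 < x -> is_derive x 1 G ((1 + x) `^ (- alpha)).
Proof.
move=> x_gtN1.
have := is_deriveZ (- (alpha - 1)^-1) (is_derive_powR_shift (1 - alpha) _ x_gtN1).
have -> : - (alpha - 1)^-1 \*: (fun s : R => (1 + s) `^ (1 - alpha)) = G.
  by apply/funext => s; rewrite /G /= scaleNr [_ *: _]mulrC.
move/is_derive_eq; apply.
have -> : 1 - alpha - 1 = - alpha by ring.
by rewrite scaleNr [_ *: _]mulrA -mulNr -mulrN opprB mulVf ?mul1r // subr_eq0 gt_eqF.
Qed.

Lemma Gbar_closed t : -1 < t -> Gbar alpha t = (1 + t) `^ (1 - alpha) / (alpha - 1).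
Proof.
move=> t_gtN1.
have cont_G (x : R) : -1 < x -> {for x, continuous (G : R^o -> R^o)}.
  move=> /is_derive_G [dG _]; exact/differentiable_continuous/derivable1_diffP.
have cont_f (x : R) : -1 < x -> {for x, continuous (fun s : R^o => (1 + s) `^ (- alpha))}.
  move=> /(is_derive_powR_shift (- alpha) x) [df _].
  exact/differentiable_continuous/derivable1_diffP.
rewrite /Gbar (@Rintegral_ge0_continuous_FTC2y R _ G t 0).
- by rewrite /G sub0r opprK.
- by move=> x _; exact: powR_ge0.
- apply/continuous_within_itvcyP; split; last exact/cvg_at_right_filter/cont_f.
  by move=> x; rewrite in_itv /= andbT => tx; apply: cont_f; lra.
- rewrite /G -oppr0; apply: cvgN; rewrite -(mul0r (alpha - 1)^-1); apply: cvgMl.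
  rewrite (_ : 1 - alpha = - (alpha - 1)); last by ring.
  by apply: powR_shift_cvg0; rewrite subr_gt0.
- by move=> x tx; have [] := is_derive_G x ltac:(lra).
- exact/(@cvg_at_right_filter R R^o)/cont_G.
- move=> x; rewrite in_itv /= andbT => tx.
  by have [_ <-] := is_derive_G x ltac:(lra); rewrite derive1E.
Qed.
End Gbar_closed_form.

Lemma powRN_sub_ge {R : realType} (b x y : R) : 0 < x -> x <= y -> 0 <= b ->
  b * (y - x) * y `^ (- b - 1) <= x `^ (- b) - y `^ (- b).
Proof.
move=> x_gt0 xy b_ge0.
have y_gt0 : 0 < y by lra.
set t := x / y.
have t_gt0 : 0 < t by rewrite divr_gt0.
have ln_t : ln t <= t - 1.
  by have := expR_ge1Dx (ln t); rewrite lnK ?posrE //; lra.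
have pow_t : 1 + b * (1 - t) <= t `^ (- b).
  rewrite /powR gt_eqF //; apply: le_trans (expR_ge1Dx _).
  by rewrite lerD2l mulNr -mulrN ler_wpM2l //; lra.
have -> : x = t * y by rewrite /t divfK ?gt_eqF.
have -> : y `^ (- b - 1) = y `^ (- b) / y.
  by rewrite powRB ?powRr1 ?(ltW y_gt0) // (gt_eqF y_gt0) implybT.
rewrite (powRM (- b) (ltW t_gt0) (ltW y_gt0)).
have -> : b * (y - t * y) * (y `^ (- b) / y) = b * (1 - t) * y `^ (- b).
  by field; rewrite gt_eqF.
rewrite -[X in _ <= _ - X]mul1r -mulrBl ler_wpM2r ?powR_ge0 //; lra.
Qed.

Lemma nk_double k : (0 < k)%N -> nk k.+1 = (2 * nk k)%N.
Proof. by case: k => // k _; rewrite /nk expnS. Qed.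

Lemma gfun_ge {R : realType} (alpha m mu : R) (k : nat) :
  1 < alpha -> 1 <= m -> 0 < mu -> (2 <= k)%N ->
  (alpha - 1) * mu * (nk k.-1)%:R * (m + 1) `^ (alpha - 1)
    <= gfun alpha m mu k * (2 * (mu * (nk k.-1)%:R + m)) `^ alpha.
Proof.
move=> alpha_gt1 m_ge1 mu_gt0 k_ge2.
have [j -> j_gt0] : exists2 j, k = j.+1 & (0 < j)%N by exists k.-1; lia.
rewrite /gfun nk_double // /= natrM mulr1.
set n := (nk j)%:R.
have n_ge1 : 1 <= n by rewrite /n /nk ler1n expn_gt0.
rewrite !Gbar_closed //; try nra.
set x := 1 + (m + mu * n); set y := 1 + (m + mu * (2%:R * n)); set z := 1 + (m + mu).
have x_gt0 : 0 < x by rewrite /x; nra.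
have xy : x <= y by rewrite /x /y; nra.
have b_gt0 : 0 < alpha - 1 by lra.
have neg_b : 1 - alpha = - (alpha - 1) by ring.
set A := x `^ (1 - alpha) - y `^ (1 - alpha).
have -> : (x `^ (1 - alpha) / (alpha - 1) - y `^ (1 - alpha) / (alpha - 1)) /
    (z `^ (1 - alpha) / (alpha - 1)) = A * z `^ (alpha - 1).
  have z_gt0 : 0 < z by rewrite /z; lra.
  rewrite /A [in z `^ _]neg_b powRN; field.
  by rewrite !gt_eqF ?powR_gt0.
have A_bound : (alpha - 1) * mu * n <= A * y `^ alpha.
  have := powRN_sub_ge _ _ _ x_gt0 xy (ltW b_gt0).
  rewrite (_ : - (alpha - 1) - 1 = - alpha); last by ring.
  rewrite -neg_b [y `^ (- alpha)]powRN -/A.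
  rewrite (_ : y - x = mu * n); last by rewrite /x /y; ring.
  by rewrite ler_pdivrMr ?powR_gt0 ?mulrA //; lra.
have A_ge0 : 0 <= A.
  have : 0 < A * y `^ alpha by apply: lt_le_trans A_bound; rewrite !mulr_gt0 //; lra.
  by rewrite pmulr_lgt0 ?powR_gt0 //; [exact: ltW | lra].
have y_le : y `^ alpha <= (2 * (mu * n + m)) `^ alpha.
  by apply: ge0_ler_powR; rewrite ?nnegrE /y; nra.
have z_ge : (m + 1) `^ (alpha - 1) <= z `^ (alpha - 1).
  by apply: ge0_ler_powR; rewrite ?nnegrE /z; lra.
rewrite [in X in _ <= X]mulrAC.
apply: le_trans (ler_wpM2r (powR_ge0 _ _) A_bound) _.
by rewrite ler_pM ?mulr_ge0 ?powR_ge0 // ler_wpM2l.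
Qed.

Section tail_bounds.
Context {d} {T : measurableType d} {R : realType} (P : probability T R).

Lemma markov_posPart (Y : {RV P >-> R}) (c p : R) : 0 < c -> 0 <= p ->
  ((c `^ p)%:E * P (Y @^-1` `]c, +oo[) <=
   \int[P]_x ((Num.max (Y x) 0) `^ p)%:E)%E.
Proof.
move=> c_gt0 p_ge0; set F := Y @^-1` `]c, +oo[.
have mF : measurable F by exact: measurable_funPTI.
have mf : measurable_fun setT (fun x : T => ((Num.max (Y x) 0) `^ p)%:E : \bar R).
  apply/measurable_EFinP/(measurableT_comp (measurable_powR _)).
  exact: measurable_maxr.
have f_ge0 x : (0 <= ((Num.max (Y x) 0) `^ p)%:E)%E by rewrite lee_fin powR_ge0.
rewrite -integral_cst //.
apply: le_trans (ge0_subset_integral _ _ _ _ _ (subsetT F)) => //.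
apply: ge0_le_integral => //.
- by move=> x _; rewrite lee_fin powR_ge0.
- exact: measurable_funS mf.
- move=> x; rewrite /F /= in_itv /= andbT => cY; rewrite lee_fin.
  by apply: ge0_ler_powR; rewrite ?nnegrE ?le_max ?lexx //; lra.
Qed.

Variable X : nat -> {RV P >-> R}.

Lemma measurable_notBk (mu m delta : R) k : measurable (~` Bk X mu m delta k).
Proof.
apply/measurableC/bigcap_measurableType => j _.
rewrite (_ : [set t | _] = X j @^-1` `]-oo, (mu * (nk k.-1)%:R + m) `^ (1 - delta)]).
  exact: measurable_funPTI.
by apply/seteqP; split => t /=; rewrite in_itv.
Qed.

Lemma notBk_le_union (mu m delta : R) k : identically_distributed X ->
  (P (~` Bk X mu m delta k) <= ((nk k)%:R)%:E *
     P (X 0%N @^-1` `]((mu * (nk k.-1)%:R + m) `^ (1 - delta))%R, +oo[))%E.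
Proof.
move=> Xid; set c := _ `^ _; set F := fun j => X j @^-1` `]c, +oo[.
have mF j : measurable (F j) by exact: measurable_funPTI.
apply: (@le_trans _ _ (\sum_(j < nk k) P (F j))%E).
  apply: content_subadditive => //; first exact: measurable_notBk.
  rewrite /Bk setC_bigcap -bigcup_mkord => t [j /= /andP[j_ge1 j_lt] Xj].
  have nk_gt0 : (0 < nk k)%N by rewrite /nk expn_gt0.
  exists j; first by rewrite /=; lia.
  by rewrite /F /=; rewrite in_itv /= andbT ltNge; apply/negP.
rewrite (eq_bigr (fun=> P (F 0%N))); last by move=> j _; exact: Xid.
have PF0 : P (F 0%N) \is a fin_num by rewrite fin_num_measure.
by rewrite -(fineK PF0) sumEFin big_const_ord iter_addr addr0 -EFinM mulr_natl.
Qed.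

Lemma notBk_moment_bound (mu m delta : R) k (p alpha e : R) : identically_distributed X ->
  1 <= mu * (nk k.-1)%:R + m -> 0 <= p -> alpha <= (1 - delta) * p ->
  (\int[P]_x ((Num.max (X 0%N x) 0) `^ p)%:E = e%:E)%E ->
  fine (P (~` Bk X mu m delta k)) * (mu * (nk k.-1)%:R + m) `^ alpha
    <= (nk k)%:R * e.
Proof.
move=> Xid w_ge1 p_ge0 alpha_le moment.
set w := mu * _ + m in w_ge1 *; set c := w `^ (1 - delta).
have c_gt0 : 0 < c by rewrite powR_gt0 //; lra.
set r := fine (P (~` Bk X mu m delta k)).
have PB : P (~` Bk X mu m delta k) = r%:E.
  by rewrite fineK // fin_num_measure //; exact: measurable_notBk.
have : ((c `^ p)%:E * r%:E <= ((nk k)%:R)%:E * e%:E)%E.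
  rewrite -PB -moment.
  apply: le_trans (lee_wpmul2l _ (notBk_le_union _ _ _ _ Xid)) _.
    by rewrite lee_fin powR_ge0.
  rewrite muleCA; apply: lee_wpmul2l; first by rewrite lee_fin.
  exact: markov_posPart.
rewrite -!EFinM lee_fin; apply: le_trans.
by rewrite mulrC ler_wpM2r ?fine_ge0 // /c -powRrM ler_powR.
Qed.
End tail_bounds.

Lemma pmule_le1_fin_num {R : realType} (c : R) (x : \bar R) :
  0 < c -> (0 <= x)%E -> (c%:E * x <= 1)%E -> x \is a fin_num.
Proof.
move=> c_gt0 x_ge0 cx; rewrite ge0_fin_numE //.
by apply: le_lt_trans (ltry c^-1); rewrite -[_%:E]mule1 lee_pdivlMl.
Qed.

Theorem lemma3 (d : measure_display) (T : measurableType d) (R : realType)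
  (P : probability T R) (X : nat -> {RV P >-> R})
  (eps mu m delta alpha : R) :
  iid X ->
  ('E_P[X 0%N] = 0)%E ->
  0 < eps ->
  (\int[P]_x ((`|X 0%N x|) `^ (2 + eps))%:E < +oo)%E ->
  0 < mu -> 1 <= m -> 0 < delta -> delta <= 2^-1 ->
  2 < alpha -> alpha <= (2 + eps) * (1 - delta) ->
  ((6 * 2 `^ alpha / ((alpha - 1) * (m + 1) `^ (alpha - 1) * mu))%:E
     * \int[P]_x ((Num.max (X 0%N x) 0) `^ (2 + eps))%:E <= 1)%E ->
  forall k : nat, (2 <= k)%N ->
    3 * fine (P (~` Bk X mu m delta k)) / gfun alpha m mu k <= 1.
Proof.
move=> [_ Xid] _ eps_gt0 _ mu_gt0 m_ge1 _ _ alpha_gt2 alpha_le.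
set K := 6 * _ / _; set E := integral _ _ _; move=> hK k k_ge2.
set n : R := (nk k.-1)%:R; set w := mu * n + m.
have n_ge1 : 1 <= n by rewrite /n /nk ler1n expn_gt0.
have w_ge1 : 1 <= w by rewrite /w; nra.
have nkE : (nk k)%:R = 2 * n :> R by rewrite -natrM -nk_double ?prednK //; lia.
have K_gt0 : 0 < K by rewrite /K divr_gt0 ?mulr_gt0 ?powR_gt0 ?subr_gt0 //; lra.
have E_ge0 : (0 <= E)%E by apply: integral_ge0 => x _; rewrite lee_fin powR_ge0.
have E_eq : E = (fine E)%:E by rewrite fineK // (pmule_le1_fin_num _ _ K_gt0 E_ge0 hK).
set e := fine E in E_eq; rewrite E_eq -EFinM lee_fin in hK.
have tail := notBk_moment_bound P X mu m delta k (2 + eps) alpha e Xid w_ge1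
  ltac:(lra) ltac:(lra) E_eq.
rewrite -/w nkE in tail; set r := fine _ in tail *.
have hK' : 6 * 2 `^ alpha * e <= (alpha - 1) * (m + 1) `^ (alpha - 1) * mu.
  by move: hK; rewrite /K mulrAC ler_pdivrMr ?mul1r // !mulr_gt0 ?powR_gt0 //; lra.
have g_ge := gfun_ge alpha m mu k ltac:(lra) m_ge1 mu_gt0 k_ge2.
rewrite -/n -/w powRM // in g_ge; last lra.
set g := gfun alpha m mu k in g_ge *.
have C_gt0 : 0 < 2 `^ alpha * w `^ alpha by rewrite mulr_gt0 ?powR_gt0 //; lra.
have g_gt0 : 0 < g.
  rewrite -(pmulr_lgt0 _ C_gt0); apply: lt_le_trans g_ge.
  by rewrite !mulr_gt0 ?powR_gt0 //; lra.
rewrite ler_pdivrMr // mul1r -(ler_pM2r C_gt0).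
apply: (@le_trans _ _ (n * (6 * 2 `^ alpha * e))).
  rewrite [leRHS](_ : _ = 3 * 2 `^ alpha * (2 * n * e)); last by ring.
  rewrite [leLHS](_ : _ = 3 * 2 `^ alpha * (r * w `^ alpha)); last by ring.
  by rewrite ler_wpM2l // mulr_ge0 ?powR_ge0.
apply: le_trans (ler_wpM2l _ hK') _; first lra.
by rewrite [leLHS](_ : _ = (alpha - 1) * mu * n * (m + 1) `^ (alpha - 1)) //; ring.
Qed.
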